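(* Let $p$ be an odd prime, $q=p^m$, $q=et+1$ with integers $e\geq 2,t\geq 1$, $R_{e,q}=\mathbb{F}_q[u]/\langle u^e-1\rangle$ with orthogonal idempotents $\mu_1,\dots,\mu_e$ (see context). Let $\mathcal{C}=\bigoplus_{i=1}^e\mu_i\mathcal{C}_i$ be a cyclic code of length $n$ over $R_{e,q}$. Then $\mathcal{C}$ is an LCD code if and only if $\mathcal{C}_i$ is an LCD cyclic code of length $n$ over $\mathbb{F}_q$ for every $1\leq i\leq e$.
   Context: Write $u^e-1=\prod_{i=1}^e(u-\alpha_i)$ over $\mathbb{F}_q$, $G_i=u-\alpha_i$, $\widehat{G}_i=(u^e-1)/G_i$, $z_iG_i+h_i\widehat{G}_i=1$, $\mu_i=h_i\widehat{G}_i$; these are pairwise orthogonal idempotents summing to $1$. For a linear code $\mathcal{C}\subseteq R_{e,q}^n$, $\mathcal{C}_i=\{s_i\in\mathbb{F}_q^n:\exists\, s_j\ (j\neq i)\text{ with }\sum_{j}s_j\mu_j\in\mathcal{C}\}$ and $\mathcal{C}=\bigoplus_i\mu_i\mathcal{C}_i$. A linear code $\mathcal{C}$ is LCD (linear complementary dual) if $\mathcal{C}\cap\mathcal{C}^\perp=\{0\}$, the dual taken with respect to the Euclidean inner product. *)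

From HB Require Import structures.
From mathcomp Require Import all_boot all_order all_algebra.
Set Implicit Arguments. Unset Strict Implicit. Unset Printing Implicit Defensive.
Import GRing.Theory.
Local Open Scope ring_scope.

Section Codes.
Variables (R : comNzRingType) (n : nat).

Definition linear_code (C : 'rV[R]_n -> Prop) : Prop :=
  [/\ C 0, (forall x y, C x -> C y -> C (x + y)) &
      (forall (r : R) x, C x -> C (r *: x))].

Definition cshift (x : 'rV[R]_n) : 'rV[R]_n := \row_(j < n) x 0 (ord_pred j).

Definition cyclic_code (C : 'rV[R]_n -> Prop) : Prop :=
  linear_code C /\ (forall x, C x -> C (cshift x)).

Definition euclid (x y : 'rV[R]_n) : R := \sum_(j < n) x 0 j * y 0 j.

Definition dual_code (C : 'rV[R]_n -> Prop) : 'rV[R]_n -> Prop :=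
  fun y => forall x, C x -> euclid x y = 0.

Definition LCD_code (C : 'rV[R]_n -> Prop) : Prop :=
  linear_code C /\ (forall x, C x -> dual_code C x -> x = 0).
End Codes.

Definition Req (F : fieldType) (e : nat) := {poly %/ ('X^e - 1 : {poly F})}.

Definition embF (F : fieldType) (e : nat) (c : F) : Req F e :=
  in_qpoly ('X^e - 1) c%:P.

Definition Ghat (F : fieldType) (e : nat) (alpha : 'I_e -> F) (i : 'I_e) : {poly F} :=
  ('X^e - 1) %/ ('X - (alpha i)%:P).

Definition mu (F : fieldType) (e : nat) (alpha : 'I_e -> F)
  (h : 'I_e -> {poly F}) (i : 'I_e) : Req F e :=
  in_qpoly ('X^e - 1) (h i * Ghat alpha i).

Definition comp_code (F : fieldType) (e n : nat) (alpha : 'I_e -> F)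
  (h : 'I_e -> {poly F}) (C : 'rV[Req F e]_n -> Prop) (i : 'I_e) :
  'rV[F]_n -> Prop :=
  fun s => exists S : 'I_e -> 'rV[F]_n,
    S i = s /\ C (\sum_(j < e) mu alpha h j *: map_mx (@embF F e) (S j)).

From HB Require Import structures.
From mathcomp Require Import all_boot all_order all_algebra.
Set Implicit Arguments. Unset Strict Implicit. Unset Printing Implicit Defensive.
Import GRing.Theory.
Local Open Scope ring_scope.

(* Evaluating residues modulo u^e - 1 at its e distinct roots alpha_k is the
   Chinese remainder isomorphism R_{e,q} ~ F^e, and it sends mu_j to the j-th
   unit vector.  Applied entrywise it splits a word x into components x_k, the
   k-th component code is the image of C under x |-> x_k, and the Euclidean
   product of x and y evaluates at alpha_k to that of x_k and y_k.  Hence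
   y lies in C^perp iff every y_k lies in C_k^perp, and C meets its dual
   trivially iff every C_k does. *)

Section QpolyEvaluation.
Variables (A : comNzRingType) (d : {poly A}).

Definition qeval (a : A) (p : {poly %/ d}) : A := (p : {poly A}).[a].

Lemma qeval_is_zmod_morphism a : zmod_morphism (qeval a).
Proof. by move=> p q; rewrite /qeval raddfB hornerD hornerN. Qed.

HB.instance Definition _ a :=
  GRing.isZmodMorphism.Build {poly %/ d} A (qeval a) (qeval_is_zmod_morphism a).

Variable a : A.
Hypothesis root_d : root (mk_monic d) a.

Lemma qeval_in_qpoly p : qeval a (in_qpoly d p) = p.[a].
Proof.
rewrite /qeval /= {2}(Pdiv.RingMonic.rdivp_eq (monic_mk_monic d) p).
by rewrite hornerD hornerM (rootP root_d) mulr0 add0r.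
Qed.

Lemma qevalM : {morph qeval a : p q / p * q}.
Proof.
move=> p q; rewrite -[p * q]/(in_qpoly d (val p * val q)).
by rewrite qeval_in_qpoly hornerM.
Qed.

End QpolyEvaluation.

Section SplitModulus.
Variables (F : fieldType) (e : nat) (alpha : 'I_e -> F) (z h : 'I_e -> {poly F}).
Hypothesis hfact : ('X^e - 1 : {poly F}) = \prod_(i < e) ('X - (alpha i)%:P).
Hypothesis hbez :
  forall i : 'I_e, z i * ('X - (alpha i)%:P) + h i * Ghat alpha i = 1.

Lemma modulus_deg_gt0 : (0 < e)%N.
Proof.
rewrite lt0n; apply/eqP => e0; move: hfact.
rewrite big1; last by move=> i; have := ltn_ord i; rewrite {2}e0.
by rewrite e0 expr0 subrr => /eqP; rewrite eq_sym oner_eq0.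
Qed.

Lemma mk_monic_modulus : mk_monic ('X^e - 1 : {poly F}) = 'X^e - 1.
Proof.
by rewrite /mk_monic -polyC1 size_XnsubC ?monicXnsubC ?ltnS ?modulus_deg_gt0.
Qed.

Lemma root_modulus k : root (mk_monic ('X^e - 1 : {poly F})) (alpha k).
Proof.
by rewrite mk_monic_modulus hfact rootE horner_prod (bigD1 k) //= hornerXsubC subrr mul0r.
Qed.

Lemma qeval_embF k c : qeval (alpha k) (embF e c) = c.
Proof. by rewrite qeval_in_qpoly ?root_modulus ?hornerC. Qed.

Lemma qeval_mu k j : qeval (alpha k) (mu alpha h j) = (j == k)%:R.
Proof.
rewrite qeval_in_qpoly ?root_modulus // hornerM.
have [<-|njk] := eqVneq j k.
  move/(congr1 (horner^~ (alpha j))): (hbez j).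
  by rewrite hornerD !hornerM hornerXsubC subrr mulr0 add0r hornerC.
rewrite /Ghat hfact (bigD1 j) //= mulKp ?polyXsubC_eq0 //.
by rewrite horner_prod (bigD1 k) 1?eq_sym //= hornerXsubC subrr mul0r mulr0.
Qed.

Lemma alpha_inj : injective alpha.
Proof.
move=> i j eq_ij; have := qeval_mu i j; rewrite eq_ij qeval_mu eqxx.
by case: eqP => [->|_ /eqP] //; rewrite oner_eq0.
Qed.

(* A nonzero remainder modulo u^e - 1 has degree < e, so it cannot vanish at
   the e distinct roots alpha k. *)
Lemma qeval_roots_inj (x y : Req F e) :
  (forall k, qeval (alpha k) x = qeval (alpha k) y) -> x = y.
Proof.
move=> exy; apply/eqP; rewrite -subr_eq0; set r := x - y.
have r_roots : all (root (r : {poly F})) (map alpha (enum 'I_e)).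
  apply/allP => _ /mapP[k _ ->]; apply/eqP.
  by rewrite -/(qeval _ r) /r raddfB /= exy subrr.
have uniq_roots : uniq (map alpha (enum 'I_e)).
  by rewrite map_inj_uniq ?enum_uniq //; exact: alpha_inj.
apply/negPn/negP => /(max_poly_roots)/(_ r_roots uniq_roots).
rewrite size_map -cardE card_ord; apply/negP; rewrite -ltnNge.
apply: leq_trans (size_mk_monic r) _.
by rewrite mk_monic_modulus -polyC1 size_XnsubC ?modulus_deg_gt0.
Qed.

End SplitModulus.

Lemma euclid0r (R : comNzRingType) n (x : 'rV[R]_n) : euclid x 0 = 0.
Proof. by rewrite /euclid big1 // => j _; rewrite mxE mulr0. Qed.

Section Components.
Variables (F : fieldType) (e n : nat) (alpha : 'I_e -> F) (z h : 'I_e -> {poly F}).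
Hypothesis hfact : ('X^e - 1 : {poly F}) = \prod_(i < e) ('X - (alpha i)%:P).
Hypothesis hbez :
  forall i : 'I_e, z i * ('X - (alpha i)%:P) + h i * Ghat alpha i = 1.

Definition component (k : 'I_e) (x : 'rV[Req F e]_n) : 'rV[F]_n :=
  map_mx (qeval (alpha k)) x.

Lemma component_is_zmod_morphism k : zmod_morphism (component k).
Proof. by move=> x y; apply/matrixP => i j; rewrite !mxE raddfB. Qed.

HB.instance Definition _ k := GRing.isZmodMorphism.Build _ _ (component k)
  (component_is_zmod_morphism k).

Local Notation embv := (map_mx (@embF F e)).

Lemma component_inj x y : (forall k, component k x = component k y) -> x = y.
Proof.
move=> exy; apply/matrixP => i j; apply: (qeval_roots_inj hfact hbez) => k.
by move/matrixP/(_ i j): (exy k); rewrite !mxE.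
Qed.

Lemma componentZ k r x :
  component k (r *: x) = qeval (alpha k) r *: component k x.
Proof. by apply/matrixP => i j; rewrite !mxE qevalM ?(root_modulus hfact). Qed.

Lemma component_cshift k x : component k (cshift x) = cshift (component k x).
Proof. by apply/matrixP => i j; rewrite !mxE. Qed.

Lemma component_embv k s : component k (embv s) = s.
Proof. by apply/matrixP => i j; rewrite !mxE (qeval_embF hfact). Qed.

Lemma component_mu_embv k j s :
  component k (mu alpha h j *: embv s) = (j == k)%:R *: s.
Proof. by rewrite componentZ (qeval_mu hfact hbez) component_embv. Qed.

Lemma component_sum_mu_embv k (S : 'I_e -> 'rV[F]_n) :
  component k (\sum_(j < e) mu alpha h j *: embv (S j)) = S k.
Proof.
rewrite raddf_sum (bigD1 k) //= component_mu_embv eqxx scale1r big1 ?addr0 //.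
by move=> j /negbTE njk; rewrite component_mu_embv njk scale0r.
Qed.

Lemma sum_mu_embv_component x :
  \sum_(j < e) mu alpha h j *: embv (component j x) = x.
Proof. by apply: component_inj => k; rewrite component_sum_mu_embv. Qed.

Lemma qeval_euclid k x y :
  qeval (alpha k) (euclid x y) = euclid (component k x) (component k y).
Proof.
rewrite /euclid raddf_sum; apply: eq_bigr => j _.
by rewrite /= qevalM ?(root_modulus hfact) ?mxE.
Qed.

Variable C : 'rV[Req F e]_n -> Prop.

Lemma comp_codeE i s :
  comp_code alpha h C i s <-> exists2 x, C x & component i x = s.
Proof.
split=> [[S [<- CS]]|[x Cx <-]].
  exists (\sum_(j < e) mu alpha h j *: embv (S j)) => //.
  by rewrite component_sum_mu_embv.
by exists (component^~ x); rewrite sum_mu_embv_component.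
Qed.

Hypothesis linC : linear_code C.

Lemma comp_code_mu_embv i s :
  comp_code alpha h C i s <-> C (mu alpha h i *: embv s).
Proof.
have [_ _ CZ] := linC; split=> [/comp_codeE[x Cx <-]|Cs].
  suff -> : mu alpha h i *: embv (component i x) = mu alpha h i *: x by exact: CZ.
  apply: component_inj => k.
  rewrite component_mu_embv componentZ (qeval_mu hfact hbez).
  by case: eqP => [->|_]; rewrite ?scale0r.
apply/comp_codeE; exists (mu alpha h i *: embv s) => //.
by rewrite component_mu_embv eqxx scale1r.
Qed.

Lemma linear_comp_code i : linear_code (comp_code alpha h C i).
Proof.
have [C0 CD CZ] := linC.
split=> [|_ _ /comp_codeE[x Cx <-] /comp_codeE[y Cy <-]|c _ /comp_codeE[x Cx <-]];
  apply/comp_codeE.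
- by exists 0; rewrite ?raddf0.
- by exists (x + y); [exact: CD | rewrite raddfD].
- by exists (embF e c *: x); [exact: CZ | rewrite componentZ (qeval_embF hfact)].
Qed.

Lemma cyclic_comp_code i :
  (forall x, C x -> C (cshift x)) -> cyclic_code (comp_code alpha h C i).
Proof.
move=> Csh; split; first exact: linear_comp_code.
move=> _ /comp_codeE[x Cx <-]; apply/comp_codeE.
by exists (cshift x); [exact: Csh | rewrite component_cshift].
Qed.

Lemma dual_code_components y :
  dual_code C y <-> forall k, dual_code (comp_code alpha h C k) (component k y).
Proof.
split=> [Cy k s /comp_code_mu_embv Cs | Cy x Cx].
  have := congr1 (qeval (alpha k)) (Cy _ Cs).
  by rewrite qeval_euclid component_mu_embv eqxx scale1r raddf0.
apply: (qeval_roots_inj hfact hbez) => k; rewrite qeval_euclid raddf0.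
by apply: Cy; apply/comp_codeE; exists x.
Qed.

Lemma LCD_code_components :
  LCD_code C <-> forall k, LCD_code (comp_code alpha h C k).
Proof.
split=> [[_ LC] k | LCk].
  split=> [|s Cs dual_s]; first exact: linear_comp_code.
  have y0 : mu alpha h k *: embv s = 0.
    apply: LC; first exact/comp_code_mu_embv.
    apply/dual_code_components => l; rewrite component_mu_embv.
    by case: eqP => [<-|_]; rewrite ?scale1r // scale0r => w _; rewrite euclid0r.
  by have := congr1 (component k) y0; rewrite component_mu_embv eqxx scale1r raddf0.
split=> // x Cx /dual_code_components dual_x.
apply: component_inj => k; rewrite raddf0.
by have [_ LC] := LCk k; apply: LC => //; apply/comp_codeE; exists x.
Qed.

End Components.

Theorem theorem4p3 (F : finFieldType) (p m e t n : nat)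
  (hp : prime p) (hodd : odd p) (hq : #|F| = (p ^ m)%N)
  (he : (2 <= e)%N) (ht : (1 <= t)%N) (het : (p ^ m)%N = (e * t + 1)%N)
  (alpha : 'I_e -> F)
  (hfact : ('X^e - 1 : {poly F}) = \prod_(i < e) ('X - (alpha i)%:P))
  (z h : 'I_e -> {poly F})
  (hbez : forall i : 'I_e, z i * ('X - (alpha i)%:P) + h i * Ghat alpha i = 1)
  (C : 'rV[Req F e]_n -> Prop) (hC : cyclic_code C) :
  LCD_code C <->
  (forall i : 'I_e,
     cyclic_code (comp_code alpha h C i) /\ LCD_code (comp_code alpha h C i)).
Proof.
(* The arithmetic hypotheses on p, q, e and t only serve to guarantee that
   hfact and hbez can be met; the argument uses nothing else. *)
have [linC Csh] := hC.
have LCD_iff := LCD_code_components hfact hbez linC.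
split=> [/LCD_iff LCD_Ci i | LCD_Ci].
  by split; [exact: cyclic_comp_code | exact: LCD_Ci].
by apply/LCD_iff => k; have [] := LCD_Ci k.
Qed.
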